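(* Let $Ab_0$ denote the class of all finite abelian groups, and define $f:Ab_0\to(0,\infty)$ by $f(G)=\frac{|\mathrm{Aut}(G)|}{|G|}$, where $\mathrm{Aut}(G)$ is the automorphism group of $G$. Then the set $\mathrm{Im}(f)=\{f(G)\mid G\in Ab_0\}$ is dense in $[0,\infty)$. *)

From HB Require Import structures.
From mathcomp Require Import all_boot all_order all_algebra all_fingroup.
From mathcomp Require Import reals.
Set Implicit Arguments. Unset Strict Implicit. Unset Printing Implicit Defensive.
Import Order.TTheory GRing.Theory Num.Theory.
Local Open Scope ring_scope.

(* Aut G is MathComp's
   automorphism group of G (permutations of gT supported on G that are
   morphisms on G), whose cardinality is the order of the abstract Aut(G). *)
Definition autratio (R : realType) (gT : finGroupType) (G : {group gT}) : R :=
  (#|Aut G|%:R / #|G|%:R).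

From HB Require Import structures.
From mathcomp Require Import all_boot all_order all_algebra all_fingroup all_solvable.
From mathcomp Require Import reals.
From mathcomp Require Import ring lra zify.
From mathcomp Require Import boolp sequences.
Import Order.TTheory GRing.Theory Num.Theory.
Set Implicit Arguments. Unset Strict Implicit. Unset Printing Implicit Defensive.

(* Let E_k = (Z/2)^k. For odd n the product E_k x Z/n is a direct product of
   groups of coprime orders, whose automorphisms split along the two factors,
   so f(E_k x Z/n) = f(E_k) * phi(n)/n. Permuting coordinates shows
   |Aut E_k| >= k!, so f(E_k) >= k!/2^k is unbounded, and it suffices that the
   ratios phi(n)/n with n odd are dense in [0, 1]. For n the product of the
   primes in (M, j], phi(n)/n = prod (1 - 1/p) decreases in j by steps smaller
   than 1/M and tends to 0: indeed phi(j!)/j! * H_j <= 1, because the j!/k are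
   distinct divisors of j! and sum_(d | N) phi(d) = N, while the harmonic sums
   H_j diverge. Hence these products pass within 1/M of every target. *)

Lemma prime_dvd_fact p n : prime p -> (p %| n`!) = (p <= n).
Proof.
move=> p_pr; apply/idP/idP => [|le_pn]; last by rewrite dvdn_fact ?prime_gt0.
elim: n => [|n IHn]; first by rewrite dvdn1 => /eqP p1; rewrite p1 in p_pr.
by rewrite factS Euclid_dvdM // => /orP[/(dvdn_leq (ltn0Sn n)) | /IHn/leqW].
Qed.

Lemma primes_fact n : primes n`! = [seq p <- iota 0 n.+1 | prime p].
Proof.
apply: (irr_sorted_eq ltn_trans ltnn (sorted_primes _)).
  exact/sorted_filter/iota_ltn_sorted/ltn_trans.
move=> p; rewrite mem_primes mem_filter mem_iota fact_gt0 add0n ltnS.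
by case: (boolP (prime p)) => //= /prime_dvd_fact.
Qed.

Lemma sum_totient_quotients_le n j : 0 < n -> (forall k, 0 < k <= j -> k %| n) ->
  \sum_(0 <= k < j) totient (n %/ k.+1) <= n.
Proof.
move=> n_gt0 dvd_n; rewrite -[leqRHS]sum_totient_dvd -(big_mkord (fun d => d %| n) totient).
rewrite -[leqRHS]big_filter -(big_map (fun k => n %/ k.+1) xpredT totient).
apply: (@uniq_sub_le_big _ _ _ leqnn (fun m n => leq_addr n m));
  rewrite ?filter_uniq ?iota_uniq //.
  rewrite map_inj_in_uniq ?iota_uniq // => a b; rewrite !mem_index_iota => a_lt b_lt.
  have [da db] := (dvd_n a.+1 a_lt, dvd_n b.+1 b_lt).
  have q_gt0 : 0 < n %/ a.+1 by rewrite divn_gt0 // dvdn_leq.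
  by move=> e; apply/succn_inj/eqP; rewrite -(eqn_pmul2l q_gt0) divnK // e divnK.
move=> d /mapP[k]; rewrite mem_index_iota => k_lt ->.
by rewrite mem_filter mem_index_iota ltnS leq_div dvdn_div ?dvd_n.
Qed.

Section TotientRatio.
Variable R : realFieldType.
Local Open Scope ring_scope.

Definition totient_ratio n : R := (totient n)%:R / n%:R.

Lemma totient_ratio_gt0 n : (0 < n)%N -> 0 < totient_ratio n.
Proof. by move=> n_gt0; rewrite divr_gt0 // ltr0n ?totient_gt0. Qed.

Lemma subr_invn_le1 k : 1 - (k%:R : R)^-1 <= 1.
Proof. by rewrite gerBl invr_ge0. Qed.

Lemma subr_invn_ge0 k : 0 <= 1 - (k%:R : R)^-1.
Proof.
by rewrite subr_ge0; case: k => [|k]; rewrite ?invr0 ?ler01 // invf_le1 ?ler1n ?ltr0n.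
Qed.

Lemma totient_ratio_coprime a b :
  coprime a b -> totient_ratio (a * b) = totient_ratio a * totient_ratio b.
Proof. by move=> co_ab; rewrite /totient_ratio totient_coprime // !natrM invfM mulrACA. Qed.

Lemma totient_ratio_prime p : prime p -> totient_ratio p = 1 - p%:R^-1.
Proof.
move=> p_pr; have p_gt0 := prime_gt0 p_pr.
rewrite /totient_ratio totient_prime // -subn1 natrB // mulrBl.
by rewrite divff ?pnatr_eq0 -?lt0n ?mul1r.
Qed.

Lemma totient_ratio_primes n :
  (0 < n)%N -> totient_ratio n = \prod_(p <- primes n) (1 - p%:R^-1).
Proof.
move=> n_gt0; rewrite /totient_ratio totientE // [in X in _ / X](prod_prime_decomp n_gt0).
rewrite prime_decompE big_map /= !natr_prod -prodfV -big_split /=.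
apply: eq_big_seq => p p_n; have p_pr : prime p by move: p_n; rewrite mem_primes => /andP[].
have p0 : p%:R != 0 :> R by rewrite pnatr_eq0 -lt0n prime_gt0.
move: p_n; rewrite -logn_gt0; case: (logn p n) => // e _.
rewrite -subn1 /= expnS !natrM natrB ?prime_gt0 // natrX.
by field; rewrite p0 expf_neq0.
Qed.

Lemma totient_ratio_dvd_le d n :
  (0 < n)%N -> (d %| n)%N -> totient_ratio n <= totient_ratio d.
Proof.
move=> n_gt0 dv_dn; have d_gt0 : (0 < d)%N by apply: dvdn_gt0 dv_dn.
rewrite !totient_ratio_primes // (bigID (mem (primes d))) /=.
have -> : \prod_(p <- primes n | p \in primes d) (1 - p%:R^-1) =
          \prod_(p <- primes d) (1 - p%:R^-1) :> R.
  rewrite -big_filter; apply/perm_big/uniq_perm; rewrite ?filter_uniq ?primes_uniq //.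
  move=> p; rewrite mem_filter andb_idr // !mem_primes n_gt0 => /and3P[-> _].
  by move/dvdn_trans->.
by rewrite ler_piMr ?prodr_ge0 ?prodr_ile1 // => p _; rewrite subr_invn_ge0 ?subr_invn_le1.
Qed.

Lemma totient_ratio_fact n :
  totient_ratio n`! = \prod_(0 <= p < n.+1 | prime p) (1 - p%:R^-1).
Proof. by rewrite totient_ratio_primes ?fact_gt0 // primes_fact big_filter. Qed.

Lemma totient_ratio_prod_primes s : uniq s -> all prime s ->
  totient_ratio (\prod_(p <- s) p) = \prod_(p <- s) (1 - p%:R^-1).
Proof.
elim: s => [|p s IHs] /=; first by rewrite !big_nil /totient_ratio divr1.
case/andP=> p_s uniq_s /andP[p_pr s_pr]; rewrite !big_cons -IHs //.
rewrite totient_ratio_coprime ?(totient_ratio_prime p_pr) // prime_coprime //.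
rewrite Euclid_dvd_prod // big_has; apply: contra p_s => /hasP[q q_s].
by rewrite dvdn_prime2 ?(allP s_pr q q_s) // => /eqP->.
Qed.

Lemma totient_ratio_harmonic_le n j : (0 < n)%N ->
    (forall k, (0 < k <= j)%N -> (k %| n)%N) ->
  totient_ratio n * \sum_(0 <= k < j) (k.+1%:R)^-1 <= 1.
Proof.
move=> n_gt0 dvd_n.
rewrite mulr_sumr (@le_trans _ _ (\sum_(0 <= k < j) (totient (n %/ k.+1))%:R / n%:R)) //.
  apply: ler_sum_nat => k /= k_lt; have dvd_k := dvd_n k.+1 k_lt.
  have n_eq : n%:R = (n %/ k.+1)%:R * k.+1%:R :> R by rewrite -natrM divnK.
  rewrite [in leRHS]n_eq invfM mulrA ler_wpM2r ?invr_ge0 //.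
  exact: totient_ratio_dvd_le n_gt0 (dvdn_div dvd_k).
rewrite -mulr_suml -natr_sum ler_pdivrMr ?ltr0n // mul1r ler_nat.
exact: sum_totient_quotients_le.
Qed.

Lemma totient_ratio_fact_split M j : (M <= j)%N ->
  totient_ratio j`! =
    totient_ratio M`! * \prod_(M.+1 <= p < j.+1 | prime p) (1 - p%:R^-1).
Proof. by move=> le_Mj; rewrite !totient_ratio_fact -big_cat_nat. Qed.

Lemma prime_prod_step_le M j :
  \prod_(M.+1 <= p < j.+1 | prime p) (1 - p%:R^-1) -
  \prod_(M.+1 <= p < j.+2 | prime p) (1 - p%:R^-1) <= M.+1%:R^-1 :> R.
Proof.
have [j_lt_M | M_le_j] := ltnP j M.
  by rewrite !big_geq ?subrr ?invr_ge0 // ltnW.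
rewrite [X in _ - X]big_mkcond big_nat_recr ?ltnS //= -big_mkcond.
set u := \prod_(_ <= p < _ | _) _; case: ifP => _; last by rewrite mulr1 subrr invr_ge0.
have [u_ge0 u_le1] : 0 <= u /\ u <= 1.
  split; [apply: prodr_ge0 | apply: prodr_ile1] => p _;
  by rewrite ?subr_invn_ge0 ?subr_invn_le1.
have -> : u - u * (1 - j.+1%:R^-1) = u * j.+1%:R^-1 by ring.
apply: le_trans (ler_piMl _ u_le1) _; first by rewrite invr_ge0.
by rewrite lef_pV2 ?posrE ?ltr0n // ler_nat ltnS.
Qed.

End TotientRatio.

Section SmallSteps.
Variable R : realDomainType.
Local Open Scope ring_scope.

Lemma small_steps_hit_window (u : nat -> R) (y d : R) :
    y <= u 0%N -> (forall j, u j - u j.+1 <= d) -> (exists j, u j < y + d) ->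
  exists j, y <= u j < y + d.
Proof.
move=> y_le_u0 step_le ex_lt; have [j uj_lt j_min] := ex_minnP ex_lt.
exists j; rewrite uj_lt andbT; case: j uj_lt j_min => // j _ j_min.
have : y + d <= u j by rewrite leNgt; apply/negP => /j_min; rewrite ltnn.
by have := step_le j; lra.
Qed.

End SmallSteps.

Section Approximation.
Variable R : realType.
Local Open Scope ring_scope.

Lemma harmonic_unbounded (c : R) : exists j, c < \sum_(0 <= k < j) k.+1%:R^-1.
Proof.
apply: contrapT => /forallNP c_ge; apply: (@dvg_harmonic R).
apply: nondecreasing_is_cvgn.
  by apply: nondecreasing_series => k _ _; apply: harmonic_ge0.
by exists c => _ [j _ <-]; rewrite leNgt; apply/negP/c_ge.
Qed.

Lemma prime_prod_vanishing M (c : R) : 0 < c ->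
  exists j, \prod_(M.+1 <= p < j.+1 | prime p) (1 - p%:R^-1) < c.
Proof.
move=> c_gt0; set r := totient_ratio R M`!.
have r_gt0 : 0 < r by apply/totient_ratio_gt0/fact_gt0.
have [j0 H_j0] := harmonic_unbounded (c * r)^-1.
pose H j := \sum_(0 <= k < j) k.+1%:R^-1 : R.
have H_mono : {homo H : m n / (m <= n)%N >-> m <= n}.
  by apply: nondecreasing_series => k _ _; apply: harmonic_ge0.
set j := (j0 + M)%N; exists j; set u := \prod_(_ <= p < _ | _) _.
have H_gt : 1 < c * r * H j.
  rewrite -ltr_pdivrMl ?(mulr_gt0 c_gt0 r_gt0) // mulr1.
  exact: lt_le_trans H_j0 (H_mono _ _ (leq_addr _ _)).
have := totient_ratio_harmonic_le R (fact_gt0 j) (fun k => @dvdn_fact k j).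
rewrite (totient_ratio_fact_split R (leq_addl _ _)) -/r -/u -/(H j) => rHu_le1.
rewrite ltNge; apply/negP => c_le_u; suff : c * r * H j <= r * u * H j by lra.
have H_ge0 : 0 <= H j by apply: sumr_ge0 => k _; apply: harmonic_ge0.
by rewrite ler_wpM2r // [r * u]mulrC ler_wpM2r // ltW.
Qed.

Lemma odd_totient_ratio_dense (y d : R) : 0 <= y <= 1 -> 0 < d ->
  exists n, odd n /\ y <= totient_ratio R n < y + d.
Proof.
move=> /andP[y_ge0 y_le1] d_gt0; set M := (Num.bound d^-1).+2.
have step_lt_d : M.+1%:R^-1 < d.
  rewrite -[d]invrK ltf_pV2 ?posrE ?invr_gt0 ?ltr0n //.
  have d_inv_lt : d^-1 < (Num.bound d^-1)%:R by rewrite archi_boundP // invr_ge0 ltW.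
  by apply: lt_le_trans d_inv_lt _; rewrite ler_nat -addn3 leq_addr.
pose n_ j := \prod_(M.+1 <= p < j.+1 | prime p) p.
pose u j := \prod_(M.+1 <= p < j.+1 | prime p) (1 - p%:R^-1) : R.
have [|||j /andP[u_ge u_lt]] := @small_steps_hit_window R u y M.+1%:R^-1.
- by rewrite /u big_geq.
- exact: prime_prod_step_le.
- by apply: prime_prod_vanishing; rewrite ltr_pwDr ?invr_gt0.
exists (n_ j); split.
  rewrite /n_ big_seq_cond; apply: (big_ind odd) => // [a b|p]; first by rewrite oddM => ->.
  rewrite mem_index_iota => /andP[/andP[M_lt_p _] p_pr].
  by case: (even_prime p_pr) => // p2; rewrite p2 in M_lt_p.
rewrite /n_ -big_filter totient_ratio_prod_primes ?filter_uniq ?iota_uniq ?filter_all //.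
by rewrite big_filter -/(u j) u_ge (lt_le_trans u_lt) // lerD2l ltW.
Qed.

End Approximation.

Section AutDirectProduct.
Variable gT : finGroupType.
Implicit Types H K G : {group gT}.
Local Open Scope group_scope.

Lemma dprod_coprime_char H K G : H \x K = G -> coprime #|H| #|K| -> H \char G.
Proof.
move=> defG coHK; have [nsHG _] := dprod_normal2 defG.
have hallH : Hall G H by rewrite -(coprime_sdprod_Hall_l (dprodWsd defG)).
by rewrite -(normal_Hall_pcore (Hall_pi hallH) nsHG) pcore_char.
Qed.

Lemma char_Aut_astabs H G a : H \char G -> a \in Aut G -> a \in 'N(H | 'P).
Proof.
case/andP=> _ /forall_inP chH autGa; rewrite !inE /=; apply/subsetP=> x Hx.
by rewrite inE /=; apply: (subsetP (chH a autGa)); apply: imset_f.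
Qed.

Lemma Aut_dprod_extend H K G b c : H \x K = G -> b \in Aut H -> c \in Aut K ->
  exists2 a, a \in Aut G & {in H, a =1 b} /\ {in K, a =1 c}.
Proof.
move=> defG autHb autKc; have [_ defHK _ trHK] := dprodP defG.
have cHK : autm autKc @* K \subset 'C(autm autHb @* H).
  by rewrite !im_autm; case/dprodP: defG.
pose f := dprodm defG cHK.
have injf : 'injm f by rewrite injm_dprodm !injm_autm !im_autm trHK eqxx.
have imf : f @* G = G by rewrite im_dprodm !im_autm.
exists (aut injf imf); first exact: Aut_aut.
have [sHG sKG] : H \subset G /\ K \subset G by rewrite -defHK mulG_subl mulG_subr.
split=> [x Hx | x Kx].
  by rewrite autE ?(subsetP sHG) //= (dprodmEl defG cHK Hx) /= autmE.
by rewrite autE ?(subsetP sKG) //= (dprodmEr defG cHK Kx) /= autmE.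
Qed.

Lemma card_Aut_dprod_coprime H K G : H \x K = G -> coprime #|H| #|K| ->
  #|Aut G| = (#|Aut H| * #|Aut K|)%N.
Proof.
move=> defG coHK; have [_ defHK _ _] := dprodP defG.
have [sHG sKG] : H \subset G /\ K \subset G by rewrite -defHK mulG_subl mulG_subr.
have chH := dprod_coprime_char defG coHK.
have chK : K \char G by rewrite (@dprod_coprime_char K H) 1?dprodC // coprime_sym.
have restrE (L : {group gT}) a : L \char G -> a \in Aut G -> {in L, restr_perm L a =1 a}.
  by move=> chL autGa x Lx; rewrite restr_permE // (char_Aut_astabs chL).
pose rho a := (restr_perm H a, restr_perm K a).
rewrite -cardsX -(@card_in_imset _ _ rho); last first.
  move=> a b autGa autGb [eqH eqK]; apply: (eq_Aut autGa autGb) => x.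
  case/(mem_dprod defG)=> u [v [Hu Kv -> _]].
  have [Gu Gv] := (subsetP sHG u Hu, subsetP sKG v Kv).
  rewrite (morphicP (Aut_morphic autGa)) // (morphicP (Aut_morphic autGb)) //.
  by rewrite -(restrE _ a chH) // -(restrE _ a chK) // eqH eqK !restrE.
apply: eq_card => -[b c]; rewrite inE /=.
apply/imsetP/andP=> [[a autGa [-> ->]] | [autHb autKc]].
  by rewrite (Aut_restr_perm sHG) ?(Aut_restr_perm sKG).
have [a autGa [aH aK]] := Aut_dprod_extend defG autHb autKc.
exists a => //; congr pair.
  by apply: (eq_Aut autHb (Aut_restr_perm sHG autGa)) => x Hx; rewrite restrE ?aH.
by apply: (eq_Aut autKc (Aut_restr_perm sKG autGa)) => x Kx; rewrite restrE ?aK.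
Qed.

End AutDirectProduct.

Section DirectPower.
Variables (gT : finGroupType) (k : nat).
Local Open Scope group_scope.

Lemma card_dffun_power : #|[set: {dffun 'I_k -> gT}]| = (#|gT| ^ k)%N.
Proof. by rewrite cardsT card_ffun card_ord. Qed.

Lemma abelian_dffun_power : abelian [set: gT] -> abelian [set: {dffun 'I_k -> gT}].
Proof.
move=> cTT; apply/centsP=> x _ y _; apply/ffunP=> i; rewrite !mulg_ffun.
by apply: (centsP cTT); rewrite inE.
Qed.

Lemma card_Aut_dffun_power_ge : (1 < #|gT|)%N ->
  (k`! <= #|Aut [set: {dffun 'I_k -> gT}]|)%N.
Proof.
move=> gT_nt; have /trivgPn[g _ ntg] : [set: gT] != 1.
  by rewrite trivg_card1 cardsT gtn_eqF.
pose shift (s : {perm 'I_k}) (x : {dffun 'I_k -> gT}) : {dffun 'I_k -> gT} :=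
  [ffun i => x (s i)].
have shift_inj s : injective (shift s).
  move=> x y /ffunP eq_xy; apply/ffunP=> i.
  by have := eq_xy (s^-1 i); rewrite !ffunE permKV.
pose P s := perm (shift_inj s).
have P_inj : injective P.
  move=> s t eq_st; apply/permP=> i; apply/eqP/negPn/negP=> neq_st; case/negP: ntg.
  pose x : {dffun 'I_k -> gT} := [ffun j => if j == s i then g else 1].
  have := congr1 (fun p : {perm _} => p x i) eq_st.
  by rewrite !permE !ffunE eqxx eq_sym (negbTE neq_st) => ->.
rewrite -card_Sn -(card_imset _ P_inj); apply/subset_leq_card/subsetP=> _ /imsetP[s _ ->].
rewrite inE; apply/andP; split; first by apply/subsetP=> x; rewrite inE.
by apply/morphicP=> x y _ _; rewrite !permE; apply/ffunP=> i; rewrite !ffunE.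
Qed.

End DirectPower.

Lemma abelian_setX (aT rT : finGroupType) (H : {group aT}) (K : {group rT}) :
  abelian H -> abelian K -> abelian (setX H K).
Proof.
move=> cHH cKK; apply/centsP=> -[a b] /setXP[Ha Hb] [c d] /setXP[Hc Hd].
by congr pair; [apply: (centsP cHH) | apply: (centsP cKK)].
Qed.

Lemma card_Aut_isog (aT rT : finGroupType) (H : {group aT}) (K : {group rT}) :
  H \isog K -> #|Aut H| = #|Aut K|.
Proof. by case/isogP=> f injf <-; rewrite (card_isog (injm_Aut injf (subxx H))). Qed.

Lemma Zp_cyclic n : cyclic (Zp n).
Proof. by rewrite /Zp; case: ifP => _; rewrite ?cyclic1 // Zp_cycle cycle_cyclic. Qed.

Lemma exp2_mul_le_fact m : (2 ^ (m + 4) * m.+1 <= (m + 4)`!)%N.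
Proof. by elim: m => [|m IHm] //; rewrite addSn factS expnS; nia. Qed.

Section AutRatio.
Variable R : realType.
Local Open Scope ring_scope.

Lemma autratio_setX (aT rT : finGroupType) (H : {group aT}) (K : {group rT}) :
  coprime #|H| #|K| -> autratio R (setX H K) = autratio R H * autratio R K.
Proof.
move=> coHK; have [isoH isoK] := (isog_setX1 rT H, isog_set1X aT K).
have co1 : coprime #|setX H (1 : {set rT})%g| #|setX (1 : {set aT})%g K|.
  by rewrite !cardsX !cards1 muln1 mul1n.
rewrite /autratio (card_Aut_dprod_coprime (setX_dprod _ _) co1).
by rewrite -(card_Aut_isog isoH) -(card_Aut_isog isoK) cardsX !natrM invfM mulrACA.
Qed.

Lemma autratio_Zp n : (0 < n)%N -> autratio R (Zp n) = totient_ratio R n.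
Proof. by move=> n_gt0; rewrite /autratio card_Aut_cyclic ?Zp_cyclic // card_Zp. Qed.

Lemma autratio_elementary_unbounded (c : R) :
  exists k, c <= autratio R [set: {dffun 'I_k -> 'Z_2}]%G.
Proof.
set m := Num.bound `|c|; have c_lt_m : `|c| < m%:R by rewrite archi_boundP.
have card_Z2 : #|'Z_2| = 2%N by rewrite card_ord.
exists (m + 4)%N; rewrite /autratio card_dffun_power card_Z2.
rewrite ler_pdivlMr ?ltr0n ?expn_gt0 //.
apply: (@le_trans _ _ (m.+1%:R * (2 ^ (m + 4))%:R)).
  by rewrite ler_pM2r ?ltr0n ?expn_gt0 // -natr1; have := ler_norm c; lra.
rewrite -natrM ler_nat mulnC (leq_trans (exp2_mul_le_fact m)) //.
by rewrite card_Aut_dffun_power_ge ?card_Z2.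
Qed.

End AutRatio.

Local Open Scope ring_scope.

Theorem theorem1p1 (R : realType) (x e : R) (hx : 0 <= x) (he : 0 < e) :
  exists (gT : finGroupType) (G : {group gT}),
    abelian G /\ `|autratio R G - x| < e.
Proof.
have [k A_ge] := autratio_elementary_unbounded (x + 1).
set E := [set: {dffun 'I_k -> 'Z_2}]%G in A_ge; set A := autratio R E in A_ge.
have A_gt0 : 0 < A by lra.
have [|n [odd_n /andP[g_ge g_lt]]] :=
  @odd_totient_ratio_dense R (x / A) (e / A) _ (divr_gt0 he A_gt0).
  by rewrite divr_ge0 ?(ltW A_gt0) //= ler_pdivrMr // mul1r; lra.
have coEn : coprime #|E| #|Zp n|.
  by rewrite card_Zp ?odd_gt0 // card_dffun_power card_ord coprimeXl ?coprime2n.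
exists _, (setX E (Zp n)); split.
  by rewrite abelian_setX ?abelian_dffun_power ?cyclic_abelian ?Zp_cyclic ?Zp_abelian.
rewrite autratio_setX // autratio_Zp ?odd_gt0 // -/A.
move: g_ge g_lt; rewrite -mulrDl ler_pdivrMr // ltr_pdivlMr // [_ * A]mulrC => g_ge g_lt.
by rewrite ltr_norml; apply/andP; split; lra.
Qed.
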